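(* Let $\mathcal{C}=(\mathcal{T},\mathcal{I},\mathcal{R})$ be an extraction context with thresholds \textit{minsupp} and \textit{minbond}. Then $\mathcal{RCPR}=\mathcal{CRCP}\cup\mathcal{MRCP}$ is a perfect cover of $\mathcal{RCP}$: it is an exact concise representation of $\mathcal{RCP}$ and its size never exceeds that of $\mathcal{RCP}$, i.e. $|\mathcal{RCPR}|\le|\mathcal{RCP}|$ for every extraction context and all values of \textit{minsupp} and \textit{minbond}.
   Context: An extraction context is a triple $\mathcal{C}=(\mathcal{T},\mathcal{I},\mathcal{R})$ with $\mathcal{T}$ a finite set of transactions, $\mathcal{I}$ a finite set of items and $\mathcal{R}\subseteq\mathcal{T}\times\mathcal{I}$. For a pattern $I\subseteq\mathcal{I}$: $\mathit{Supp}(\wedge I)=|\{t:\forall i\in I,(t,i)\in\mathcal{R}\}|$, $\mathit{Supp}(\vee I)=|\{t:\exists i\in I,(t,i)\in\mathcal{R}\}|$, and for nonempty $I$, $\mathit{bond}(I)=\mathit{Supp}(\wedge I)/\mathit{Supp}(\vee I)$ (with $\mathit{bond}(\emptyset)=+\infty$ by convention). $\mathcal{RCP}=\{I\subseteq\mathcal{I}:\mathit{Supp}(\wedge I)<\textit{minsupp},\ \mathit{bond}(I)\ge\textit{minbond}\}$. $\mathcal{CRCP}=\{I\in\mathcal{RCP}:\forall I_1\supsetneq I,\ \mathit{bond}(I)>\mathit{bond}(I_1)\}$; $\mathcal{MRCP}=\{I\in\mathcal{RCP}:\forall I_1\subsetneq I,\ \mathit{bond}(I)<\mathit{bond}(I_1)\}$.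 A family $\mathcal{S}\subseteq\mathcal{RCP}$, with each $J\in\mathcal{S}$ recorded together with $\mathit{Supp}(\wedge J)$ and $\mathit{bond}(J)$, is an exact concise representation of $\mathcal{RCP}$ if, for every pattern $I\subseteq\mathcal{I}$, the recorded data alone suffice to decide whether $I\in\mathcal{RCP}$ and, when $I\in\mathcal{RCP}$, to determine exactly $\mathit{Supp}(\wedge I)$ and $\mathit{bond}(I)$. *)

From mathcomp Require Import all_boot all_order all_algebra.
Set Implicit Arguments. Unset Strict Implicit. Unset Printing Implicit Defensive.
Import Order.TTheory GRing.Theory Num.Theory.
Local Open Scope ring_scope.

Section Context.
Variables (F : realFieldType) (Item : finType).

(* Extended bond values: None stands for +infinity (bond of the empty pattern). *)
Definition bond_ge (b : option F) (m : F) : bool :=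
  match b with None => true | Some r => m <= r end.
Definition bond_gt (b1 b2 : option F) : bool :=
  match b1, b2 with
  | None, None => false
  | None, Some _ => true
  | Some _, None => false
  | Some x, Some y => y < x
  end.

Variable Trans : finType.
Variable Rel : Trans -> Item -> bool.

Definition suppAnd (X : {set Item}) : nat :=
  #|[set t | [forall i in X, Rel t i]]|.
Definition suppOr (X : {set Item}) : nat :=
  #|[set t | [exists i in X, Rel t i]]|.
Definition bond (X : {set Item}) : option F :=
  if X == set0 then None
  else Some ((suppAnd X)%:R / (suppOr X)%:R).

Variables (minsupp : nat) (minbond : F).

Definition RCP : {set {set Item}} :=
  [set X | (suppAnd X < minsupp)%N && bond_ge (bond X) minbond].
Definition CRCP : {set {set Item}} :=
  [set X in RCP | [forall Y : {set Item}, (X \proper Y) ==> bond_gt (bond X) (bond Y)]].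
Definition MRCP : {set {set Item}} :=
  [set X in RCP | [forall Y : {set Item}, (Y \proper X) ==> bond_gt (bond Y) (bond X)]].
Definition RCPR : {set {set Item}} := CRCP :|: MRCP.

Definition record (S : {set {set Item}}) : {ffun {set Item} -> option (nat * option F)} :=
  [ffun J => if J \in S then Some (suppAnd J, bond J) else None].

End Context.

(* S assigns to every extraction context (over the item set Item, with the fixed
   thresholds) a family of patterns. *)
Definition exact_concise_rep (F : realFieldType) (Item : finType)
  (minsupp : nat) (minbond : F)
  (S : forall Trans : finType, (Trans -> Item -> bool) -> {set {set Item}}) : Prop :=
  (forall (Trans : finType) (Rel : Trans -> Item -> bool),
      S Trans Rel \subset @RCP F Item Trans Rel minsupp minbond) /\
  exists decode : {ffun {set Item} -> option (nat * option F)} -> {set Item} ->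
                  option (nat * option F),
    forall (Trans : finType) (Rel : Trans -> Item -> bool) (X : {set Item}),
      decode (@record F Item Trans Rel (S Trans Rel)) X =
      if X \in @RCP F Item Trans Rel minsupp minbond then Some (suppAnd Rel X, @bond F Item Trans Rel X) else None.

From mathcomp Require Import all_boot all_order all_algebra zify.
Import Order.TTheory GRing.Theory Num.Theory.
Set Implicit Arguments. Unset Strict Implicit. Unset Printing Implicit Defensive.

(* Conjunctive support and bond can only decrease when a pattern grows, so RCP
   is convex for inclusion; moreover, two nested patterns with the same bond
   have the same conjunctive support.  Hence, for X in RCP, a largest superset
   of X with the bond of X lies in CRCP and a smallest such subset lies in
   MRCP.  So X is in RCP iff recorded patterns lie below and above it; bond(X)
   is then the largest recorded bond of a superset of X, and Supp(/\X) is the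
   recorded support of any superset attaining it. *)

Section BondOrder.
Variable F : realFieldType.
Implicit Types (a b : option F) (m : F).
Local Open Scope ring_scope.

Lemma bond_ngt_anti a b : ~~ bond_gt a b -> ~~ bond_gt b a -> a = b.
Proof.
by case: a b => [x|] [y|] //=; rewrite -!leNgt => yx xy; rewrite (@le_anti _ _ x y) ?yx ?xy.
Qed.

Lemma bond_ge_ngt_trans a b m : bond_ge a m -> ~~ bond_gt a b -> bond_ge b m.
Proof. by case: a b => [x|] [y|] //=; rewrite -leNgt; apply: le_trans. Qed.

Lemma bond_ngt_neq a b : ~~ bond_gt a b -> a != b -> bond_gt b a.
Proof.
case: a b => [x|] [y|] //=; rewrite -leNgt lt_neqAle => -> neq_xy.
by rewrite andbT; apply: contra neq_xy => /eqP ->.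
Qed.

Lemma ler_ratio_nat (a a' o o' : nat) : (a' <= a)%N -> (o <= o')%N -> (a <= o)%N ->
  a'%:R / o'%:R <= a%:R / o%:R :> F.
Proof.
move=> le_a'a le_oo' le_ao; have [o0|o_gt0] := posnP o.
  have [-> ->] : a = 0%N /\ a' = 0%N by lia.
  by rewrite !mul0r.
rewrite ler_pdivrMr ?ltr0n; last by lia.
by rewrite mulrAC ler_pdivlMr ?ltr0n // -!natrM ler_nat; nia.
Qed.

Lemma eq_ratio_nat_num (a a' o o' : nat) : (a' <= a)%N -> (o <= o')%N -> (a <= o)%N ->
  a'%:R / o'%:R = a%:R / o%:R :> F -> a' = a.
Proof.
move=> le_a'a le_oo' le_ao; have [o0|o_gt0] := posnP o; first by lia.
move/eqP; rewrite eqr_div ?pnatr_eq0 -?lt0n //; last by lia.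
by rewrite -!natrM eqr_nat => /eqP; nia.
Qed.

End BondOrder.

Section Supports.
Context {F : realFieldType} {Item Trans : finType} {Rel : Trans -> Item -> bool}.
Implicit Types X Y : {set Item}.
Local Notation bond := (@bond F Item Trans Rel).

Lemma suppAnd_leOr X : X != set0 -> (suppAnd Rel X <= suppOr Rel X)%N.
Proof.
case/set0Pn => x xX; apply: subset_leq_card; apply/subsetP => t; rewrite !inE.
by move/forall_inP => RtX; apply/exists_inP; exists x; last exact: RtX.
Qed.

Lemma suppAndS X Y : X \subset Y -> (suppAnd Rel Y <= suppAnd Rel X)%N.
Proof.
move=> sXY; apply: subset_leq_card; apply/subsetP => t; rewrite !inE.
by move/forall_inP => RtY; apply/forall_inP => i /(subsetP sXY); apply: RtY.
Qed.

Lemma suppOrS X Y : X \subset Y -> (suppOr Rel X <= suppOr Rel Y)%N.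
Proof.
move=> sXY; apply: subset_leq_card; apply/subsetP => t; rewrite !inE.
by case/exists_inP => i /(subsetP sXY) iY Rti; apply/exists_inP; exists i.
Qed.

Lemma bondS X Y : X \subset Y -> ~~ bond_gt (bond Y) (bond X).
Proof.
move=> sXY; rewrite /bond.
have [Y0|Yn0] := eqVneq Y set0.
  by move: sXY; rewrite Y0 subset0 => /eqP ->; rewrite eqxx.
have [//|Xn0] := eqVneq X set0.
rewrite /= -leNgt; apply: ler_ratio_nat.
- exact: suppAndS.
- exact: suppOrS.
- exact: suppAnd_leOr.
Qed.

Lemma bond_eq_suppAnd X Y : X \subset Y -> bond X = bond Y -> suppAnd Rel X = suppAnd Rel Y.
Proof.
move=> sXY; rewrite /bond.
have [->|Xn0] := eqVneq X set0; first by case: eqP => // ->.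
have Yn0 : Y != set0.
  by apply: contraNneq Xn0 => Y0; rewrite -subset0 -Y0.
rewrite (negbTE Yn0) => -[/esym eq_ratio]; apply/esym/(eq_ratio_nat_num _ _ _ eq_ratio).
- exact: suppAndS.
- exact: suppOrS.
- exact: suppAnd_leOr.
Qed.

Lemma bond_proper_gt X Y : X \proper Y -> bond Y != bond X -> bond_gt (bond X) (bond Y).
Proof. by move=> ltXY; apply: bond_ngt_neq (bondS (proper_sub ltXY)). Qed.

End Supports.

Section Representation.
Variables (F : realFieldType) (Item Trans : finType) (Rel : Trans -> Item -> bool).
Variables (minsupp : nat) (minbond : F).
Implicit Types X Y M C : {set Item}.
Local Notation bond := (@bond F Item Trans Rel).
Local Notation RCP := (RCP Rel minsupp minbond).
Local Notation CRCP := (CRCP Rel minsupp minbond).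
Local Notation MRCP := (MRCP Rel minsupp minbond).
Local Notation RCPR := (RCPR Rel minsupp minbond).

Lemma RCPR_sub_RCP : RCPR \subset RCP.
Proof. by apply/subsetP => J; rewrite !inE => /orP[] /andP[]. Qed.

Lemma RCP_convex M X C : M \subset X -> X \subset C -> M \in RCP -> C \in RCP -> X \in RCP.
Proof.
move=> sMX sXC; rewrite !inE => /andP[M_rare _] /andP[_ C_bond].
rewrite (leq_ltn_trans (suppAndS sMX) M_rare) /=.
exact: bond_ge_ngt_trans C_bond (bondS sXC).
Qed.

Lemma RCP_eq_bond X Y : X \in RCP -> (suppAnd Rel Y <= suppAnd Rel X)%N ->
  bond Y = bond X -> Y \in RCP.
Proof.
by rewrite !inE => /andP[X_rare X_bond] le_YX ->; rewrite (leq_ltn_trans le_YX X_rare).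
Qed.

Lemma CRCP_closure X : X \in RCP -> exists C, [/\ C \in CRCP, X \subset C & bond C = bond X].
Proof.
move=> XR; have XX : (X \subset X) && (bond X == bond X) by rewrite subxx eqxx.
case: (@arg_maxnP _ X (fun Y => (X \subset Y) && (bond Y == bond X)) (fun Y => #|Y|) XX).
move=> C /andP[sXC /eqP eqC] maxC; exists C; split => //.
rewrite inE (RCP_eq_bond XR (suppAndS sXC) eqC); apply/forall_inP => Z ltCZ.
apply: (bond_proper_gt ltCZ); apply/eqP => eqZ.
have := maxC Z; rewrite (subset_trans sXC (proper_sub ltCZ)) eqZ eqC eqxx.
by move/(_ isT)/leq_gtF; rewrite proper_card.
Qed.

Lemma MRCP_generator X : X \in RCP -> exists2 M, M \in MRCP & M \subset X.
Proof.
move=> XR; have XX : (X \subset X) && (bond X == bond X) by rewrite subxx eqxx.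
case: (@arg_minnP _ X (fun Y => (Y \subset X) && (bond Y == bond X)) (fun Y => #|Y|) XX).
move=> M /andP[sMX /eqP eqM] minM; exists M => //.
have MR := RCP_eq_bond XR (eq_leq (bond_eq_suppAnd sMX eqM)) eqM.
rewrite inE MR; apply/forall_inP => Z ltZM.
apply: (bond_proper_gt ltZM); apply/eqP => eqZ.
have := minM Z; rewrite (subset_trans (proper_sub ltZM) sMX) -eqZ eqM eqxx.
by move/(_ isT)/leq_gtF; rewrite proper_card.
Qed.

End Representation.

Section Decoding.
Variables (F : realFieldType) (Item : finType).
Local Notation record_t := {ffun {set Item} -> option (nat * option F)}.
Implicit Types (r : record_t) (X J : {set Item}).

Definition recorded_bond r J : option F := if r J is Some (_, b) then b else None.

Definition decode_RCPR r X : option (nat * option F) :=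
  if [exists M, isSome (r M) && (M \subset X)] then
    if [pick C | [&& isSome (r C), X \subset C &
                   [forall C', (isSome (r C') && (X \subset C')) ==>
                                 ~~ bond_gt (recorded_bond r C') (recorded_bond r C)]]]
    is Some C then r C else None
  else None.

Variables (Trans : finType) (Rel : Trans -> Item -> bool) (minsupp : nat) (minbond : F).
Local Notation bond := (@bond F Item Trans Rel).
Local Notation RCP := (RCP Rel minsupp minbond).
Local Notation RCPR := (RCPR Rel minsupp minbond).
Local Notation r := (@record F Item Trans Rel RCPR).

Lemma isSome_record_RCPR J : isSome (r J) = (J \in RCPR).
Proof. by rewrite ffunE; case: ifP. Qed.

Lemma record_RCPR J : J \in RCPR -> r J = Some (suppAnd Rel J, bond J).
Proof. by rewrite ffunE => ->. Qed.

Lemma recorded_bond_RCPR J : J \in RCPR -> recorded_bond r J = bond J.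
Proof. by rewrite /recorded_bond => /record_RCPR ->. Qed.

Lemma decode_RCPRP X : decode_RCPR r X = if X \in RCP then Some (suppAnd Rel X, bond X) else None.
Proof.
rewrite /decode_RCPR; have [XR|XnR] := boolP (X \in RCP); last first.
  case: existsP => // -[M /andP[MR sMX]]; case: pickP => // C /and3P[CR sXC _].
  case/negP: XnR; apply: (RCP_convex sMX sXC); apply: (subsetP (RCPR_sub_RCP Rel minsupp minbond));
    by rewrite -isSome_record_RCPR.
have [M MR sMX] := MRCP_generator XR.
have [C [CR sXC eqC]] := CRCP_closure XR.
have {}CR : C \in RCPR by rewrite in_setU CR.
rewrite ifT; last by apply/existsP; exists M; rewrite isSome_record_RCPR in_setU MR orbT.
case: pickP => [C0 /and3P[C0R sXC0 maxC0] | /(_ C)]; last first.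
  rewrite isSome_record_RCPR CR sXC /= => /negbT/negP[].
  apply/forall_inP => C' /andP[C'R sXC']; rewrite isSome_record_RCPR in C'R.
  by rewrite !recorded_bond_RCPR // eqC; apply: bondS.
rewrite isSome_record_RCPR in C0R.
have eqC0 : bond C0 = bond X.
  apply: bond_ngt_anti (bondS sXC0) _.
  move/forall_inP: maxC0 => /(_ C); rewrite isSome_record_RCPR CR sXC.
  by rewrite !recorded_bond_RCPR // eqC => /(_ isT).
by rewrite record_RCPR // eqC0 (bond_eq_suppAnd sXC0 (esym eqC0)).
Qed.

End Decoding.

Theorem mainTheorem5 (F : realFieldType) (Item : finType)
  (minsupp : nat) (minbond : F) :
  @exact_concise_rep F Item minsupp minbond
    (fun (Trans : finType) (Rel : Trans -> Item -> bool) => @RCPR F Item Trans Rel minsupp minbond) /\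
  (forall (Trans : finType) (Rel : Trans -> Item -> bool),
     #|@RCPR F Item Trans Rel minsupp minbond| <= #|@RCP F Item Trans Rel minsupp minbond|).
Proof.
split; last by move=> Trans Rel; exact/subset_leq_card/RCPR_sub_RCP.
split; first by move=> Trans Rel; exact: RCPR_sub_RCP.
by exists (@decode_RCPR F Item) => Trans Rel X; exact: decode_RCPRP.
Qed.
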